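(* Fix $k\in\{1,\dots,n\}$ and let $A\subseteq P_{\{1,\dots,k\}}M_n(\mathbb{C})$ be a set such that $E_{m,m}\in A$ for every $m\in\{1,\dots,k\}$, and such that for every nonempty subset $J\subseteq\{1,\dots,k\}$ we have $P_J\,A\,(1_n-P_J)\neq\{0\}$. Then for every $t\in\{1,\dots,k\}$ the algebra generated by $A$ contains an element $S$ such that $S(t,l)\neq 0$ for some $l\in\{k+1,\dots,n\}$.
   Context: $E_{i,j}$ denote the matrix units of $M_n(\mathbb{C})$, $1_n$ is the identity matrix, and for $J\subseteq\{1,\dots,n\}$, $P_J=\sum_{i\in J}E_{i,i}$. For a matrix $a$, $a(i,j)$ denotes its $(i,j)$ entry. $P_J A(1_n-P_J)$ denotes the set $\{P_Ja(1_n-P_J): a\in A\}$. *)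

(* Complex numbers C are modelled by an arbitrary
   numClosedFieldType (algebraically closed field of char 0 with
   conjugation/order), e.g. algC. *)
From HB Require Import structures.
From mathcomp Require Import all_boot all_order all_algebra.
Set Implicit Arguments. Unset Strict Implicit. Unset Printing Implicit Defensive.
Import Order.TTheory GRing.Theory Num.Theory.
Local Open Scope ring_scope.

Definition projJ (R : nzRingType) (n : nat) (J : {set 'I_n}) : 'M[R]_n :=
  \matrix_(i, j) ((i == j) && (i \in J))%:R.

Inductive gen_alg (R : nzRingType) (n : nat) (A : 'M[R]_n -> Prop)
  : 'M[R]_n -> Prop :=
| gen_base a : A a -> gen_alg A a
| gen_add a b : gen_alg A a -> gen_alg A b -> gen_alg A (a + b)
| gen_scale (c : R) a : gen_alg A a -> gen_alg A (c *: a)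
| gen_mul a b : gen_alg A a -> gen_alg A b -> gen_alg A (a *m b).

(* Say that column j is reached if some element of the generated algebra has
   a nonzero (t, j) entry.  If S reaches column i and a in A has a i j != 0,
   then S E_ii a reaches column j, its (t, j) entry being S t i * a i j.
   Applying the hypothesis to the set J of reached columns below k (which
   contains t, as E_tt is in A) gives i in J and j outside J with a i j != 0;
   so j is reached, hence j >= k. *)
From HB Require Import structures.
From mathcomp Require Import all_boot all_order all_algebra.
From mathcomp Require Import boolp.
Set Implicit Arguments. Unset Strict Implicit. Unset Printing Implicit Defensive.
Import Order.TTheory GRing.Theory Num.Theory.
Local Open Scope ring_scope.

Lemma projJ_mull (R : nzRingType) n (J : {set 'I_n}) (a : 'M[R]_n) i j :
  (projJ R J *m a) i j = (i \in J)%:R * a i j.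
Proof.
rewrite mxE (bigD1 i) //= big1 => [|m /negbTE m_i]; rewrite !mxE.
  by rewrite eqxx addr0.
by rewrite eq_sym m_i mul0r.
Qed.

Lemma projJ_mulr (R : nzRingType) n (J : {set 'I_n}) (a : 'M[R]_n) i j :
  (a *m projJ R J) i j = a i j * (j \in J)%:R.
Proof.
rewrite mxE (bigD1 j) //= big1 => [|m /negbTE m_j]; rewrite !mxE.
  by rewrite eqxx addr0.
by rewrite m_j mulr0.
Qed.

Lemma projJ_corner_entry (R : nzRingType) n (J : {set 'I_n}) (a : 'M[R]_n) i j :
  (projJ R J *m a *m (1%:M - projJ R J)) i j
    = ((i \in J) && (j \notin J))%:R * a i j.
Proof.
rewrite mulmxBr mulmx1 mxE [X in _ + X]mxE projJ_mulr !projJ_mull.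
by case: (i \in J); case: (j \in J);
  rewrite /= ?(mul0r, mul1r, mulr0, mulr1, subrr, subr0).
Qed.

Lemma projJ_corner_neq0 (R : nzRingType) n (J : {set 'I_n}) (a : 'M[R]_n) :
  projJ R J *m a *m (1%:M - projJ R J) != 0 ->
  exists i j, [/\ i \in J, j \notin J & a i j != 0].
Proof.
case/matrix0Pn=> i [j]; rewrite projJ_corner_entry.
case: (boolP (i \in J)) => iJ; case: (boolP (j \in J)) => jJ;
  rewrite /= ?mul0r ?eqxx // mul1r => aij.
by exists i, j.
Qed.

Lemma mulmx_delta_mx_entry (R : nzRingType) n (S a : 'M[R]_n) i t j :
  (S *m delta_mx i i *m a) t j = S t i * a i j.
Proof.
have delta_mul m : (delta_mx i i *m a) m j = (m == i)%:R * a i j.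
  rewrite mxE (bigD1 i) //= big1 => [|p /negbTE p_i]; rewrite !mxE.
    by rewrite eqxx andbT addr0.
  by rewrite p_i andbF mul0r.
rewrite -mulmxA mxE (bigD1 i) //= big1 => [|m /negbTE m_i].
  by rewrite delta_mul eqxx mul1r addr0.
by rewrite delta_mul m_i mul0r mulr0.
Qed.

Section ReachedColumns.

Variables (R : idomainType) (n : nat) (A : 'M[R]_n -> Prop) (t : 'I_n).

Definition reaches (j : 'I_n) := exists S, gen_alg A S /\ S t j != 0.

Lemma reaches_diag : A (delta_mx t t) -> reaches t.
Proof.
move=> At; exists (delta_mx t t); split; first exact: gen_base.
by rewrite mxE !eqxx oner_neq0.
Qed.

Lemma reaches_step i j a :
  reaches i -> A (delta_mx i i) -> A a -> a i j != 0 -> reaches j.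
Proof.
move=> [S [algS Sti]] Aii Aa aij; exists (S *m delta_mx i i *m a); split.
  exact: gen_mul (gen_mul algS (gen_base Aii)) (gen_base Aa).
by rewrite mulmx_delta_mx_entry mulf_neq0.
Qed.

End ReachedColumns.

Theorem lemma5 (C : numClosedFieldType) (n k : nat)
  (hk1 : (1 <= k)%N) (hkn : (k <= n)%N)
  (A : 'M[C]_n -> Prop)
  (hA : forall a, A a ->
          exists b : 'M[C]_n, a = @projJ C n [set i : 'I_n | (i < k)%N] *m b)
  (hE : forall m : 'I_n, (m < k)%N -> A (delta_mx m m))
  (hJ : forall J : {set 'I_n},
          J != set0 -> J \subset [set i : 'I_n | (i < k)%N] ->
          exists a, A a /\ @projJ C n J *m a *m (1%:M - @projJ C n J) != 0) :
  forall t : 'I_n, (t < k)%N ->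
    exists S : 'M[C]_n, gen_alg A S /\
      exists l : 'I_n, (k <= l)%N /\ S t l != 0.
Proof.
move=> t tk.
pose J := [set j : 'I_n | (j < k)%N && `[< reaches A t j >]].
have tJ : t \in J by rewrite inE tk; apply/asboolP/reaches_diag/hE.
have J_neq0 : J != set0 by apply/set0Pn; exists t.
have J_sub : J \subset [set i : 'I_n | (i < k)%N].
  by apply/subsetP => x; rewrite !inE => /andP[].
have [a [Aa /projJ_corner_neq0 [i [j [iJ jJ aij]]]]] := hJ J J_neq0 J_sub.
move: iJ; rewrite inE => /andP[ik /asboolP reach_i].
have [S [algS Stj]] := reaches_step reach_i (hE i ik) Aa aij.
case: (leqP k j) => [kj | jk]; first by exists S; split => //; exists j.
by move: jJ; rewrite inE jk /=; case/asboolP; exists S.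
Qed.
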